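(* Let $P$ be a convex pentagon whose sides are parallel to the sides of $K$ (so all its interior angles equal $3\pi/5$), with heights $m_1,\dots,m_5$. If there are indices $i,j$ with $j\equiv i\pm1\pmod 5$ such that $m_i\ge m_l$ and $m_j\ge m_l$ for every $l\notin\{i,j\}$ (i.e. the two largest heights are adjacent), then $P$ is a regular pentagon.
   Context: $K\subset\mathbb R^2$ is the regular pentagon with circumradius $1$, centroid at the origin and $(0,1)$ a vertex; $v_1,\dots,v_5$ are the position vectors of its vertices in counterclockwise order. For a compact convex set $L$, its $i$th height is $m_i=\max_{x\in L}\langle x,v_i\rangle-\min_{x\in L}\langle x,v_i\rangle$. Indices are taken mod $5$. *)

From Stdlib Require Import Reals Lra Lia.
Open Scope R_scope.

Definition pt := (R * R)%type.

Definition dot (x y : pt) : R := fst x * fst y + snd x * snd y.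

(* Vertices of the reference regular pentagon K (circumradius 1, centroid 0),
   counterclockwise, indexed by k : nat (periodic mod 5), with v 0 = (0,1).
   (The paper's v_1..v_5 are our v 0 .. v 4.) *)
Definition v (k : nat) : pt :=
  (cos (PI/2 + 2*PI*INR k/5), sin (PI/2 + 2*PI*INR k/5)).

Definition hull5 (p : nat -> pt) (x : pt) : Prop :=
  exists l : nat -> R,
    (forall k, (k < 5)%nat -> 0 <= l k) /\
    sum_f_R0 l 4 = 1 /\
    fst x = sum_f_R0 (fun k => l k * fst (p k)) 4 /\
    snd x = sum_f_R0 (fun k => l k * snd (p k)) 4.

Definition is_height (L : pt -> Prop) (i : nat) (m : R) : Prop :=
  exists a b : R,
    (exists x, L x /\ dot x (v i) = a) /\ (forall x, L x -> dot x (v i) <= a) /\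
    (exists x, L x /\ dot x (v i) = b) /\ (forall x, L x -> b <= dot x (v i)) /\
    m = a - b.

Definition regular_pentagon (L : pt -> Prop) : Prop :=
  exists (c : pt) (r phi : R), 0 < r /\
    forall x, L x <-> hull5 (fun k => (fst c + r * cos (phi + 2*PI*INR k/5),
                                      snd c + r * sin (phi + 2*PI*INR k/5))) x.

Definition parallel_pentagon (p : nat -> pt) (t : nat -> R) : Prop :=
  (forall k, (k < 5)%nat -> 0 < t k) /\
  (forall k, (k < 5)%nat ->
     fst (p (S k mod 5)%nat) - fst (p k) = t k * (fst (v (S k)) - fst (v k)) /\
     snd (p (S k mod 5)%nat) - snd (p k) = t k * (snd (v (S k)) - snd (v k))).

From Stdlib Require Import Reals Lra Lia Psatz.
Open Scope R_scope.

(* Projecting onto v_L, the vertices of a pentagon with side vectors t_k (v_{k+1} - v_k)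
   rise and fall by the fixed amounts alpha t_k, beta t_k, 0, so the L-th height is
   m_L = alpha t_L + beta t_{L+1}, while the profile closing up gives a cyclic linear
   relation on t. The heights inherit that relation, and for it two adjacent maximal
   entries force all heights to be equal. Finally m_L = alpha t_L + beta t_{L+1} being
   constant forces t to be constant, since 5 is odd (alpha^5 + beta^5 <> 0); a pentagon
   with equal side lengths t is t K + c. *)

Lemma sum_f_R0_weighted_le (l f : nat -> R) (n : nat) (M : R) :
  (forall k, (k <= n)%nat -> 0 <= l k) -> (forall k, (k <= n)%nat -> f k <= M) ->
  sum_f_R0 (fun k => l k * f k) n <= M * sum_f_R0 l n.
Proof.
  intros Hl Hf. rewrite scal_sum. apply sum_Rle. intros k Hk.
  apply Rmult_le_compat_l; auto.
Qed.

Lemma hull5_dot_le (p : nat -> pt) (x u : pt) (M : R) : hull5 p x ->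
  (forall k, (k < 5)%nat -> dot (p k) u <= M) -> dot x u <= M.
Proof.
  intros [l [Hl [Hsum [Hx Hy]]]] Hp.
  assert (Hdot : dot x u = sum_f_R0 (fun k => l k * dot (p k) u) 4).
  { unfold dot. rewrite Hx, Hy. simpl. ring. }
  rewrite Hdot. rewrite <- (Rmult_1_r M), <- Hsum.
  apply sum_f_R0_weighted_le; intros k Hk; [apply Hl | apply Hp]; lia.
Qed.

Lemma hull5_dot_ge (p : nat -> pt) (x u : pt) (M : R) : hull5 p x ->
  (forall k, (k < 5)%nat -> M <= dot (p k) u) -> M <= dot x u.
Proof.
  intros Hx Hp.
  assert (Hneg : forall y, dot y (- fst u, - snd u) = - dot y u)
    by (intro y; unfold dot; simpl; ring).
  assert (Hle : dot x (- fst u, - snd u) <= - M).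
  { apply (hull5_dot_le p); auto. intros k Hk. rewrite Hneg. specialize (Hp k Hk). lra. }
  rewrite Hneg in Hle. lra.
Qed.

Lemma hull5_vertex (p : nat -> pt) (k : nat) : (k < 5)%nat -> hull5 p (p k).
Proof.
  intros Hk. exists (fun j => if Nat.eqb j k then 1 else 0).
  destruct k as [|[|[|[|[|k]]]]]; try lia; simpl; repeat split; intros; try lra;
  match goal with |- context [if ?b then _ else _] => destruct b end; lra.
Qed.

Lemma hull5_ext (p q : nat -> pt) (x : pt) :
  (forall k, (k < 5)%nat -> p k = q k) -> hull5 p x <-> hull5 q x.
Proof.
  intros Hpq.
  assert (Hfst : forall l, sum_f_R0 (fun k => l k * fst (p k)) 4
                           = sum_f_R0 (fun k => l k * fst (q k)) 4)
    by (intro l; apply sum_eq; intros k Hk; rewrite Hpq by lia; reflexivity).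
  assert (Hsnd : forall l, sum_f_R0 (fun k => l k * snd (p k)) 4
                           = sum_f_R0 (fun k => l k * snd (q k)) 4)
    by (intro l; apply sum_eq; intros k Hk; rewrite Hpq by lia; reflexivity).
  unfold hull5. split; intros [l Hl]; exists l; rewrite ?Hfst, ?Hsnd in *; exact Hl.
Qed.

Lemma is_height_hull5 (p : nat -> pt) (i kmax kmin : nat) (h : R) :
  (kmax < 5)%nat -> (kmin < 5)%nat ->
  (forall k, (k < 5)%nat ->
     dot (p kmin) (v i) <= dot (p k) (v i) <= dot (p kmax) (v i)) ->
  is_height (hull5 p) i h -> h = dot (p kmax) (v i) - dot (p kmin) (v i).
Proof.
  intros Hmax Hmin Hb [A [B [[xa [Hxa <-]] [HA [[xb [Hxb <-]] [HB ->]]]]]].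
  assert (dot xa (v i) <= dot (p kmax) (v i))
    by (apply (hull5_dot_le p); auto; intros k Hk; apply Hb, Hk).
  assert (dot (p kmax) (v i) <= dot xa (v i)) by (apply HA, hull5_vertex, Hmax).
  assert (dot (p kmin) (v i) <= dot xb (v i))
    by (apply (hull5_dot_ge p); auto; intros k Hk; apply Hb, Hk).
  assert (dot xb (v i) <= dot (p kmin) (v i)) by (apply HB, hull5_vertex, Hmin).
  lra.
Qed.

Definition cos5 (k : nat) : R := cos (2 * PI * INR k / 5).

Lemma v_mod (n : nat) : v (n mod 5) = v n.
Proof.
  rewrite (Nat.div_mod_eq n 5) at 2.
  set (q := (n / 5)%nat). set (r := (n mod 5)%nat).
  unfold v. rewrite plus_INR, mult_INR.
  replace (PI / 2 + 2 * PI * (INR 5 * INR q + INR r) / 5)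
    with (PI / 2 + 2 * PI * INR r / 5 + 2 * INR q * PI) by (simpl; field).
  rewrite cos_period, sin_period. reflexivity.
Qed.

Lemma dot_v_add (k L : nat) : dot (v (k + L)) (v L) = cos5 k.
Proof.
  unfold dot, v, cos5. simpl. rewrite <- cos_minus, plus_INR. f_equal. field.
Qed.

Lemma cos5_reflect (k l : nat) : (k + l = 5)%nat -> cos5 l = cos5 k.
Proof.
  intros Hkl. unfold cos5.
  assert (Hl : INR l = 5 - INR k).
  { apply (f_equal INR) in Hkl. rewrite plus_INR in Hkl. simpl in Hkl. lra. }
  replace (2 * PI * INR l / 5) with (- (2 * PI * INR k / 5) + 2 * INR 1 * PI)
    by (rewrite Hl; simpl; field).
  rewrite cos_period, cos_neg. reflexivity.
Qed.

Lemma cos5_lt_pred (k : nat) : (k < 2)%nat -> cos5 (S k) < cos5 k.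
Proof.
  intros Hk. unfold cos5. pose proof PI_RGT_0 as Hpi.
  assert (HkR : INR k <= 1) by (apply (le_INR k 1); lia).
  rewrite S_INR. apply cos_decreasing_1; pose proof (pos_INR k); nra.
Qed.

(* alpha and beta are the drops of <., v L> along the sides v (L+1) - v L and
   v (L+2) - v (L+1) of K. *)
Definition alpha : R := cos5 0 - cos5 1.
Definition beta : R := cos5 1 - cos5 2.

Lemma alpha_pos : 0 < alpha.
Proof. unfold alpha. pose proof (cos5_lt_pred 0 ltac:(lia)). lra. Qed.

Lemma beta_pos : 0 < beta.
Proof. unfold beta. pose proof (cos5_lt_pred 1 ltac:(lia)). lra. Qed.

Lemma parallel_pentagon_edge_dot (p : nat -> pt) (t : nat -> R) (u : pt) (n : nat) :
  parallel_pentagon p t ->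
  dot (p (S n mod 5)) u
  = dot (p (n mod 5)) u + t (n mod 5) * (dot (v (S n)) u - dot (v n) u).
Proof.
  intros [_ Hedge].
  destruct (Hedge (n mod 5)%nat (Nat.mod_upper_bound n 5 ltac:(lia))) as [Ex Ey].
  assert (Hnext : (S (n mod 5) mod 5 = S n mod 5)%nat).
  { rewrite <- (Nat.add_1_r (n mod 5)), <- (Nat.add_1_r n).
    apply Nat.Div0.add_mod_idemp_l. }
  assert (Hv : v (S (n mod 5)) = v (S n)) by (rewrite <- v_mod, Hnext; apply v_mod).
  rewrite Hnext, Hv, v_mod in Ex, Ey. unfold dot.
  replace (fst (p (S n mod 5)%nat))
    with (fst (p (n mod 5)%nat) + t (n mod 5)%nat * (fst (v (S n)) - fst (v n))) by lra.
  replace (snd (p (S n mod 5)%nat))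
    with (snd (p (n mod 5)%nat) + t (n mod 5)%nat * (snd (v (S n)) - snd (v n))) by lra.
  ring.
Qed.

Definition profile (p : nat -> pt) (L k : nat) : R := dot (p ((k + L) mod 5)) (v L).

Lemma parallel_pentagon_profile (p : nat -> pt) (t : nat -> R) (L : nat) :
  parallel_pentagon p t ->
  profile p L 1 = profile p L 0 - alpha * t ((0 + L) mod 5)%nat /\
  profile p L 2 = profile p L 1 - beta * t ((1 + L) mod 5)%nat /\
  profile p L 3 = profile p L 2 /\
  profile p L 4 = profile p L 3 + beta * t ((3 + L) mod 5)%nat /\
  profile p L 0 = profile p L 4 + alpha * t ((4 + L) mod 5)%nat.
Proof.
  intros Hp.
  assert (Hstep : forall k, profile p L (S k)
                  = profile p L k + t ((k + L) mod 5)%nat * (cos5 (S k) - cos5 k)).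
  { intro k. unfold profile. rewrite <- (dot_v_add (S k) L), <- (dot_v_add k L).
    exact (parallel_pentagon_edge_dot p t (v L) (k + L) Hp). }
  assert (Hcycle : profile p L 5 = profile p L 0).
  { unfold profile. replace (5 + L)%nat with (0 + L + 1 * 5)%nat by lia.
    rewrite Nat.Div0.mod_add. reflexivity. }
  pose proof (Hstep 0%nat). pose proof (Hstep 1%nat). pose proof (Hstep 2%nat).
  pose proof (Hstep 3%nat). pose proof (Hstep 4%nat).
  rewrite (cos5_reflect 2 3), (cos5_reflect 1 4), (cos5_reflect 0 5) in * by reflexivity.
  unfold alpha, beta. repeat split; lra.
Qed.

Lemma mod5_shift_surj (L k : nat) : (L < 5)%nat -> (k < 5)%nat ->
  exists j, (j < 5)%nat /\ ((j + L) mod 5 = k)%nat.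
Proof.
  intros HL Hk. destruct (Nat.le_gt_cases L k) as [HLk | HkL].
  - exists (k - L)%nat. split; [lia|]. rewrite Nat.sub_add by lia. apply Nat.mod_small, Hk.
  - exists (k + 5 - L)%nat. split; [lia|].
    replace (k + 5 - L + L)%nat with (k + 1 * 5)%nat by lia.
    rewrite Nat.Div0.mod_add. apply Nat.mod_small, Hk.
Qed.

Lemma parallel_pentagon_height (p : nat -> pt) (t : nat -> R) (L : nat) (h : R) :
  parallel_pentagon p t -> (L < 5)%nat -> is_height (hull5 p) L h ->
  h = alpha * t L + beta * t (S L mod 5).
Proof.
  intros Hp HL Hh.
  destruct (parallel_pentagon_profile p t L Hp) as (E1 & E2 & E3 & E4 & E0).
  assert (Ht : forall j, 0 < t ((j + L) mod 5)%nat)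
    by (intro j; apply (proj1 Hp), Nat.mod_upper_bound; lia).
  assert (HP0 : profile p L 0 = dot (p L) (v L))
    by (unfold profile; rewrite Nat.mod_small by lia; reflexivity).
  assert (Ht0 : t ((0 + L) mod 5)%nat = t L) by (rewrite Nat.mod_small by lia; reflexivity).
  pose proof alpha_pos. pose proof beta_pos.
  pose proof (Ht 0%nat). pose proof (Ht 1%nat). pose proof (Ht 3%nat). pose proof (Ht 4%nat).
  assert (Hbounds : forall k, (k < 5)%nat ->
            profile p L 2 <= dot (p k) (v L) <= dot (p L) (v L)).
  { intros k Hk. destruct (mod5_shift_surj L k HL Hk) as [j [Hj <-]].
    fold (profile p L j). rewrite <- HP0.
    destruct j as [|[|[|[|[|j]]]]]; try lia; nra. }
  rewrite (is_height_hull5 p L L ((2 + L) mod 5) h HL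
             (Nat.mod_upper_bound (2 + L) 5 ltac:(lia)) Hbounds Hh).
  fold (profile p L 2). change (S L mod 5)%nat with ((1 + L) mod 5)%nat. nra.
Qed.

Definition closure_defect (x : nat -> R) (L : nat) : R :=
  alpha * (x ((4 + L) mod 5)%nat - x L)
  + beta * (x ((3 + L) mod 5)%nat - x ((1 + L) mod 5)%nat).

Lemma parallel_pentagon_closure (p : nat -> pt) (t : nat -> R) (L : nat) :
  parallel_pentagon p t -> (L < 5)%nat -> closure_defect t L = 0.
Proof.
  intros Hp HL. destruct (parallel_pentagon_profile p t L Hp) as (E1 & E2 & E3 & E4 & E0).
  assert (Ht0 : t ((0 + L) mod 5)%nat = t L) by (rewrite Nat.mod_small by lia; reflexivity).
  rewrite Ht0 in E1. unfold closure_defect. lra.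
Qed.

Lemma parallel_pentagon_equilateral (p : nat -> pt) (t : nat -> R) (r : R) :
  parallel_pentagon p t -> (forall k, (k < 5)%nat -> t k = r) ->
  forall k, (k < 5)%nat ->
  p k = (fst (p 0%nat) + r * (fst (v k) - fst (v 0%nat)),
         snd (p 0%nat) + r * (snd (v k) - snd (v 0%nat))).
Proof.
  intros [_ Hedge] Hr. induction k as [|k IH]; intros Hk.
  - rewrite (surjective_pairing (p 0%nat)) at 1. f_equal; ring.
  - destruct (Hedge k ltac:(lia)) as [Ex Ey].
    rewrite Nat.mod_small, Hr in Ex, Ey by lia.
    rewrite IH in Ex, Ey by lia. cbn [fst snd] in Ex, Ey.
    rewrite (surjective_pairing (p (S k))). f_equal; lra.
Qed.

Lemma closure_defect_heights (t m : nat -> R) (L : nat) :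
  (forall k, (k < 5)%nat -> m k = alpha * t k + beta * t (S k mod 5)) -> (L < 5)%nat ->
  closure_defect m L = alpha * closure_defect t L + beta * closure_defect t (S L mod 5).
Proof.
  intros Hm HL. unfold closure_defect.
  destruct L as [|[|[|[|[|L]]]]]; try lia; simpl; rewrite !Hm by lia; simpl; ring.
Qed.

Lemma closure_adjacent_max_const (x : nat -> R) (i : nat) :
  (forall L, (L < 5)%nat -> closure_defect x L = 0) -> (i < 5)%nat ->
  (forall l, (l < 5)%nat -> l <> i -> l <> (S i mod 5)%nat ->
     x l <= x i /\ x l <= x (S i mod 5)) ->
  forall k, (k < 5)%nat -> x k = x 0%nat.
Proof.
  (* With x i and x (i+1) maximal, the relation at L = i is a sum of two nonpositive
     terms and the one at L = i+2 a sum of two nonnegative terms. *)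
  intros Hc Hi Hmax k Hk.
  pose proof (Hc 0%nat ltac:(lia)). pose proof (Hc 1%nat ltac:(lia)).
  pose proof (Hc 2%nat ltac:(lia)). pose proof (Hc 3%nat ltac:(lia)).
  pose proof (Hc 4%nat ltac:(lia)).
  unfold closure_defect in *. simpl in *.
  pose proof alpha_pos. pose proof beta_pos.
  destruct i as [|[|[|[|[|i]]]]]; try lia; simpl in Hmax.
  all: try pose proof (Hmax 0%nat ltac:(lia) ltac:(lia) ltac:(lia));
       try pose proof (Hmax 1%nat ltac:(lia) ltac:(lia) ltac:(lia));
       try pose proof (Hmax 2%nat ltac:(lia) ltac:(lia) ltac:(lia));
       try pose proof (Hmax 3%nat ltac:(lia) ltac:(lia) ltac:(lia));
       try pose proof (Hmax 4%nat ltac:(lia) ltac:(lia) ltac:(lia)).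
  all: destruct k as [|[|[|[|[|k]]]]]; try lia; nra.
Qed.

Lemma cyclic_combination_const (a b c : R) (x : nat -> R) : 0 < a -> 0 < b ->
  (forall k, (k < 5)%nat -> a * x k + b * x (S k mod 5) = c) ->
  forall k, (k < 5)%nat -> x k = x 0%nat.
Proof.
  intros Ha Hb Hx.
  pose proof (Hx 0%nat ltac:(lia)). pose proof (Hx 1%nat ltac:(lia)).
  pose proof (Hx 2%nat ltac:(lia)). pose proof (Hx 3%nat ltac:(lia)).
  pose proof (Hx 4%nat ltac:(lia)). simpl in *.
  set (r := a / b).
  assert (Hratio : forall y z, a * y + b * z = 0 -> z = - r * y).
  { intros y z Hyz. unfold r. apply (Rmult_eq_reg_l b); [field_simplify; lra | lra]. }
  set (d0 := x 0%nat - x 1%nat). set (d1 := x 1%nat - x 2%nat).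
  set (d2 := x 2%nat - x 3%nat). set (d3 := x 3%nat - x 4%nat).
  set (d4 := x 4%nat - x 0%nat).
  assert (D1 : d1 = - r * d0) by (apply Hratio; unfold d0, d1; lra).
  assert (D2 : d2 = - r * d1) by (apply Hratio; unfold d1, d2; lra).
  assert (D3 : d3 = - r * d2) by (apply Hratio; unfold d2, d3; lra).
  assert (D4 : d4 = - r * d3) by (apply Hratio; unfold d3, d4; lra).
  assert (D0 : d0 = - r * d4) by (apply Hratio; unfold d4, d0; lra).
  assert (Hloop : d0 = - r ^ 5 * d0) by (rewrite D0 at 1; rewrite D4, D3, D2, D1; ring).
  assert (Hodd : (1 + r ^ 5) * d0 = 0) by lra.
  assert (Hr5 : 0 < r ^ 5) by (apply pow_lt; unfold r; apply Rdiv_lt_0_compat; lra).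
  assert (Hd0 : d0 = 0) by (destruct (Rmult_integral _ _ Hodd); lra).
  rewrite Hd0 in D1. rewrite D1 in D2. rewrite D2 in D3.
  intros k Hk. unfold d0, d1, d2, d3 in *.
  destruct k as [|[|[|[|[|k]]]]]; try lia; lra.
Qed.

Theorem lemma9 (p : nat -> pt) (t : nat -> R) (m : nat -> R) :
  parallel_pentagon p t ->
  (forall i, (i < 5)%nat -> is_height (hull5 p) i (m i)) ->
  forall i j : nat, (i < 5)%nat -> (j < 5)%nat ->
    (j = (S i mod 5)%nat \/ i = (S j mod 5)%nat) ->
    (forall l : nat, (l < 5)%nat -> l <> i -> l <> j -> m l <= m i /\ m l <= m j) ->
    regular_pentagon (hull5 p).
Proof.
  intros Hp Hh i j Hi Hj Hadj Hmax.
  assert (Hm : forall L, (L < 5)%nat -> m L = alpha * t L + beta * t (S L mod 5))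
    by (intros L HL; exact (parallel_pentagon_height p t L (m L) Hp HL (Hh L HL))).
  assert (Hcm : forall L, (L < 5)%nat -> closure_defect m L = 0).
  { intros L HL. rewrite (closure_defect_heights t m L Hm HL).
    rewrite !(parallel_pentagon_closure p t); try apply Nat.mod_upper_bound; auto. ring. }
  assert (Hmc : forall k, (k < 5)%nat -> m k = m 0%nat).
  { destruct Hadj as [-> | ->].
    - exact (closure_adjacent_max_const m i Hcm Hi Hmax).
    - apply (closure_adjacent_max_const m j Hcm Hj).
      intros l Hl Hlj Hli. destruct (Hmax l Hl Hli Hlj). auto. }
  assert (Htc : forall k, (k < 5)%nat -> t k = t 0%nat).
  { apply (cyclic_combination_const alpha beta (m 0%nat) t alpha_pos beta_pos).
    intros k Hk. rewrite <- Hm, Hmc; auto. }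
  exists (fst (p 0%nat) - t 0%nat * fst (v 0), snd (p 0%nat) - t 0%nat * snd (v 0)),
    (t 0%nat), (PI / 2).
  split; [exact (proj1 Hp 0%nat ltac:(lia)) |].
  intro x. apply hull5_ext. intros k Hk.
  rewrite (parallel_pentagon_equilateral p t (t 0%nat) Hp Htc k Hk).
  unfold v. cbn [fst snd]. f_equal; ring.
Qed.
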